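(* Let $\theta\ge1$, let $G=(\mu,\mathcal{V},\mathcal{W},\mathcal{E})$ be a $\theta$-maximal weighted bipartite graph with edge density $\delta>0$, and let $\eta\in(0,1]$. Then, for all sets $\mathcal{A}\subseteq\mathcal{V}$ and $\mathcal{B}\subseteq\mathcal{W}$ such that $\mu(\mathcal{A})\leqslant \eta\cdot \mu(\mathcal{V})$ and $\mu(\mathcal{B})\leqslant\eta \cdot \mu(\mathcal{W})$, we have $\mu(\mathcal{E}(\mathcal{A},\mathcal{B}))\leqslant \eta^{2-2/\theta} \cdot \mu(\mathcal{E})$.
   Context: A weighted bipartite graph is $G=(\mu,\mathcal{V},\mathcal{W},\mathcal{E})$ with $\mu:\mathbb{R}_{>0}\to\mathbb{R}_{>0}$, $\mathcal{V},\mathcal{W}$ finite sets of positive reals, $\mathcal{E}\subseteq\mathcal{V}\times\mathcal{W}$. $\mu(\mathcal{T})=\sum_{t\in\mathcal{T}}\mu(t)$ and $\mu(\mathcal{E})=\sum_{(v,w)\in\mathcal{E}}\mu(v)\mu(w)$. Edge density $\delta(G)=\mu(\mathcal{E})/(\mu(\mathcal{V})\mu(\mathcal{W}))$ if $\mathcal{E}\ne\emptyset$, else $0$. For $\theta\ge1$, $\mu^{(\theta)}(G)=\delta(G)^\theta\mu(\mathcal{V})\mu(\mathcal{W})$. A subgraph of $G$ is $(\mu,\mathcal{V}',\mathcal{W}',\mathcal{E}')$ with $\mathcal{V}'\subseteq\mathcal{V}$, $\mathcal{W}'\subseteq\mathcal{W}$, $\mathcal{E}'\subseteq\mathcal{E}\cap(\mathcal{V}'\times\mathcal{W}')$.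 $G$ is $\theta$-maximal if $\mu^{(\theta)}(G)\ge\mu^{(\theta)}(G')$ for every subgraph $G'$. $\mathcal{E}(\mathcal{A},\mathcal{B})=\mathcal{E}\cap(\mathcal{A}\times\mathcal{B})$. *)

From HB Require Import structures.
From mathcomp Require Import all_boot all_order all_algebra finmap.
From mathcomp Require Import mathcomp_extra boolp reals exp.
Set Implicit Arguments. Unset Strict Implicit. Unset Printing Implicit Defensive.
Import Order.TTheory GRing.Theory Num.Theory.
Local Open Scope ring_scope.
Local Open Scope fset_scope.

Section WBG.
Variable R : realType.

Definition muS (mu : R -> R) (T : {fset R}) : R := \sum_(t <- T) mu t.

Definition muE (mu : R -> R) (E : {fset (R * R)}) : R :=
  \sum_(e <- E) mu e.1 * mu e.2.

Definition is_wbg (mu : R -> R) (V W : {fset R}) (E : {fset (R * R)}) : Prop :=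
  (forall t : R, 0 < t -> 0 < mu t) /\
  (forall v, v \in V -> 0 < v) /\
  (forall w, w \in W -> 0 < w) /\
  (forall e, e \in E -> (e.1 \in V) && (e.2 \in W)).

Definition density (mu : R -> R) (V W : {fset R}) (E : {fset (R * R)}) : R :=
  if E == fset0 then 0 else muE mu E / (muS mu V * muS mu W).

Definition mu_theta (theta : R) (mu : R -> R) (V W : {fset R})
    (E : {fset (R * R)}) : R :=
  powR (density mu V W E) theta * muS mu V * muS mu W.

Definition is_subgraph (V' W' : {fset R}) (E' : {fset (R * R)})
    (V W : {fset R}) (E : {fset (R * R)}) : Prop :=
  V' `<=` V /\ W' `<=` W /\
  (forall e, e \in E' -> [&& e \in E, e.1 \in V' & e.2 \in W']).

Definition theta_maximal (theta : R) (mu : R -> R) (V W : {fset R})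
    (E : {fset (R * R)}) : Prop :=
  forall (V' W' : {fset R}) (E' : {fset (R * R)}),
    is_subgraph V' W' E' V W E -> mu_theta theta mu V' W' E' <= mu_theta theta mu V W E.

Definition edges_between (E : {fset (R * R)}) (A B : {fset R}) : {fset (R * R)} :=
  [fset e in E | (e.1 \in A) && (e.2 \in B)].

End WBG.

(** Restricting [G] to [A], [B] and the edges between them gives a subgraph
    [G'], and [theta]-maximality says [mu^(theta)(G') <= mu^(theta)(G)].
    With [s = mu(A) mu(B)], [S = mu(V) mu(W)], [e' = mu(E(A,B))], [e = mu(E)]
    this reads [e'^theta s^(1-theta) <= e^theta S^(1-theta)], i.e.
    [e'^theta <= (s/S)^(theta-1) e^theta <= eta^(2 theta - 2) e^theta];
    taking [theta]-th roots gives [e' <= eta^(2 - 2/theta) e]. *)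
From HB Require Import structures.
From mathcomp Require Import all_boot all_order all_algebra finmap.
From mathcomp Require Import mathcomp_extra boolp reals exp.
From mathcomp Require Import ring.
Import Order.TTheory GRing.Theory Num.Theory.
Local Open Scope ring_scope.
Local Open Scope fset_scope.

Section PositiveSums.
Variables (R : numDomainType) (I : eqType).

Lemma sumr_seq_ge0 (r : seq I) (F : I -> R) :
  {in r, forall i, 0 <= F i} -> 0 <= \sum_(i <- r) F i.
Proof. by move=> F0; rewrite big_seq sumr_ge0. Qed.

Lemma sumr_seq_gt0 (r : seq I) (F : I -> R) i :
  {in r, forall j, 0 < F j} -> i \in r -> 0 < \sum_(j <- r) F j.
Proof.
move=> F0 ir; rewrite big_seq lt_def psumr_neq0 => [|j /F0/ltW //].
rewrite sumr_ge0 => [|j /F0/ltW //]; rewrite andbT.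
by apply/hasP; exists i; rewrite // ir F0.
Qed.

End PositiveSums.

Section PowerInequalities.
Variable R : realType.

Lemma ler_powR2r (r x y : R) : 0 < r -> 0 <= x -> 0 <= y ->
  (x `^ r <= y `^ r) = (x <= y).
Proof.
move=> r0 x0 y0; apply/idP/idP => [|xy]; last exact: (ge0_ler_powR (ltW r0)).
by apply: contraTT; rewrite -!ltNge; exact: gt0_ltr_powR.
Qed.

Lemma powR_div_mul (t x y : R) : 0 <= x -> 0 < y ->
  x `^ t = (x / y) `^ t * y `^ t.
Proof.
by move=> x0 y0; rewrite -powRM ?divfK ?(gt_eqF y0) ?divr_ge0 ?(ltW y0).
Qed.

Lemma maximal_density_le (theta eta s S e' e : R) :
  1 <= theta -> 0 < eta -> 0 < s -> s <= eta ^+ 2 * S ->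
  0 <= e' -> 0 <= e ->
  (e' / s) `^ theta * s <= (e / S) `^ theta * S ->
  e' <= eta `^ (2 - 2 / theta) * e.
Proof.
move=> theta1 eta0 s0 sS e'0 e0 le_mu.
have theta0 : 0 < theta := lt_le_trans ltr01 theta1.
have S0 : 0 < S by rewrite -(pmulr_rgt0 _ (exprn_gt0 2 eta0)) (lt_le_trans s0).
have le_pow_s : s `^ (theta - 1) <= eta `^ (2 * (theta - 1)) * S `^ (theta - 1).
  have [eta_ge0 S_ge0] := (ltW eta0, ltW S0).
  rewrite powRrM powR_mulrn // -powRM ?exprn_ge0 //.
  by apply: ge0_ler_powR; rewrite ?subr_ge0 // nnegrE ?mulr_ge0 ?exprn_ge0 ?ltW.
rewrite -(ler_powR2r _ _ _ theta0) ?mulr_ge0 ?powR_ge0 //.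
rewrite powRM ?powR_ge0 // -powRrM.
have -> : (2 - 2 / theta) * theta = 2 * (theta - 1) by field; rewrite gt_eqF.
rewrite (powR_div_mul _ _ _ e'0 s0) (powR_div_mul _ _ _ e0 S0).
rewrite -(mulr_powRB1 (ltW s0) theta0) -(mulr_powRB1 (ltW S0) theta0) !mulrA.
apply: (le_trans (ler_wpM2r (powR_ge0 _ _) le_mu)).
apply: (le_trans (ler_wpM2l _ le_pow_s)); first by rewrite mulr_ge0 ?powR_ge0 ?ltW.
by rewrite le_eqVlt; apply/predU1P; left; ring.
Qed.

End PowerInequalities.

Lemma edges_between_subgraph {R : realType} (E : {fset (R * R)})
    {V W A B : {fset R}} :
  A `<=` V -> B `<=` W -> is_subgraph A B (edges_between E A B) V W E.
Proof. by move=> AV BW; do 2 split=> //; move=> e; rewrite !inE. Qed.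

Theorem lemma5p12 (R : realType) (theta : R) (mu : R -> R) (V W : {fset R})
    (E : {fset (R * R)}) (eta : R) :
  1 <= theta ->
  is_wbg mu V W E ->
  theta_maximal theta mu V W E ->
  0 < density mu V W E ->
  0 < eta -> eta <= 1 ->
  forall (A B : {fset R}), A `<=` V -> B `<=` W ->
    muS mu A <= eta * muS mu V ->
    muS mu B <= eta * muS mu W ->
    muE mu (edges_between E A B) <= powR eta (2 - 2 / theta) * muE mu E.
Proof.
move=> theta1 [mu0 [V0 [W0 EVW]]] maxG dens0 eta0 _ A B AV BW muA muB.
have muV : {in V, forall v, 0 < mu v} by move=> v /V0/mu0.
have muW : {in W, forall w, 0 < mu w} by move=> w /W0/mu0.
have muE0 : {in E, forall e, 0 < mu e.1 * mu e.2}.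
  by move=> e /EVW/andP[/muV ? /muW ?]; rewrite mulr_gt0.
have [->|EAB_neq0] := eqVneq (edges_between E A B) fset0.
  by rewrite /muE big_nil mulr_ge0 ?powR_ge0 ?sumr_seq_ge0 // => e /muE0/ltW.
have /fset0Pn[x] := EAB_neq0; rewrite !inE => /and3P[xE xA xB].
have [E0|E_neq0] := eqVneq E fset0; first by rewrite /density E0 eqxx ltxx in dens0.
have muA0 : 0 < muS mu A by apply: sumr_seq_gt0 xA => v /(fsubsetP AV)/muV.
have muB0 : 0 < muS mu B by apply: sumr_seq_gt0 xB => w /(fsubsetP BW)/muW.
have := maxG _ _ _ (edges_between_subgraph E AV BW).
rewrite /mu_theta /density (negbTE E_neq0) (negbTE EAB_neq0) -!mulrA.
apply: maximal_density_le; rewrite ?mulr_gt0 //.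
- by rewrite expr2 mulrACA ler_pM ?(ltW muA0) ?(ltW muB0).
- by apply: sumr_seq_ge0 => e; rewrite !inE => /andP[/muE0/ltW].
- by apply: sumr_seq_ge0 => e /muE0/ltW.
Qed.
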